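(* Let $L\ge1$, $D\ge1$, a dataset $\{(\mathbf{x}_n,y_n)\}_{n=1}^N\subset\mathbb{R}^D\times\{-1,1\}$, a differentiable loss $\ell(\hat y,y)$, and consider the gradient descent iterates $\mathbf{u}^{(t+1)}=\mathbf{u}^{(t)}-\eta_t\nabla_{\mathbf{u}}\mathcal{L}_{\mathcal{P}_{conv}}(\mathbf{u}^{(t)})$, where $\mathbf{u}=[\mathbf{u}_l]_{l=1}^L$, $\mathbf{u}_l\in\mathbb{R}^D$, and $\mathcal{L}_{\mathcal{P}_{conv}}(\mathbf{u})=\sum_n\ell(\langle\mathbf{x}_n,\mathcal{P}_{conv}(\mathbf{u})\rangle,y_n)$. Let $\hat{\mathbf{u}}^{(t)}=[\hat{\mathbf{u}}^{(t)}_l]_{l=1}^L$ be the Fourier transforms of the $\mathbf{u}^{(t)}_l$. Then for every $l$ and $t$, the update $\Delta\mathbf{u}_l^{(t)}=\mathbf{u}_l^{(t+1)}-\mathbf{u}_l^{(t)}$ satisfies $$\mathcal{F}\Delta\mathbf{u}^{(t)}_l=\hat{\mathbf{u}}^{(t+1)}_l-\hat{\mathbf{u}}^{(t)}_l=-\eta_t\nabla_{\hat{\mathbf{u}}_l}\hat{\mathcal{L}}_{\mathcal{P}_{diag}}(\hat{\mathbf{u}}^{(t)}),$$ where $\hat{\mathcal{L}}_{\mathcal{P}_{diag}}(\hat{\mathbf{u}})=\sum_n\ell(\langle\hat{\mathbf{x}}_n,\mathcal{P}_{diag}(\hat{\mathbf{u}})\rangle,y_n)$ and $\mathcal{P}_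{diag}(\hat{\mathbf{u}})=\hat{\mathbf{u}}_1\odot\cdots\odot\hat{\mathbf{u}}_L$.
   Context: Indices run over $0,\dots,D-1$. $(\mathbf{h}\star\mathbf{u})[d]=\frac{1}{\sqrt D}\sum_{k}\mathbf{u}[k]\mathbf{h}[(d+k)\bmod D]$; $\mathcal{P}_{conv}(\mathbf{u})$ is the vector with $\langle\mathbf{x},\mathcal{P}_{conv}(\mathbf{u})\rangle=((((\mathbf{x}\star\mathbf{u}_1)\star\mathbf{u}_2)\cdots)\star\mathbf{u}_{L-1})^\top\mathbf{u}_L$. $\mathcal{F}\in\mathbb{C}^{D\times D}$ is the DFT matrix $\mathcal{F}[d,p]=\frac{1}{\sqrt D}e^{-2\pi\mathrm{i}dp/D}$ and $\hat{\mathbf{z}}=\mathcal{F}\mathbf{z}$. $\odot$ is the entrywise product. The complex inner product is $\langle\hat{\mathbf{x}},\hat{\mathbf{w}}\rangle=\hat{\mathbf{x}}^\top\hat{\mathbf{w}}^*$ ($^*$ = complex conjugate), so each summand can be written $\ell\big(\hat{\mathbf{u}}_l^{*\top}\mathbf{a}_{n,l},y_n\big)$ with $\mathbf{a}_{n,l}=(\odot_{l'\neq l}\hat{\mathbf{u}}^*_{l'})\odot\hat{\mathbf{x}}_n$; the gradient convention is $\nabla_{\hat{\mathbf{u}}_l}\ell(\hat{\mathbf{u}}_l^{*\top}\mathbf{a},y)=\ell'(\hat{\mathbf{u}}_l^{*\top}\mathbf{a},y)\,\mathbf{a}$, with $\ell'=\partial\ell/\partial\hat y$. *)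

From HB Require Import structures.
From mathcomp Require Import all_boot all_order all_algebra.
From mathcomp Require Import all_classical all_reals all_analysis.
From mathcomp Require Export complex.
Set Implicit Arguments. Unset Strict Implicit. Unset Printing Implicit Defensive.
Import Order.TTheory GRing.Theory Num.Theory.
Local Open Scope ring_scope.
Local Open Scope complex_scope.

Section Defs.
Context {R : realType}.

Definition addI {D : nat} (i j : 'I_D) : 'I_D :=
  Ordinal (ltn_pmod (i + j) (leq_ltn_trans (leq0n i) (ltn_ord i))).

Definition corr {D : nat} (h u : 'I_D -> R) : 'I_D -> R :=
  fun d => (Num.sqrt (D%:R : R))^-1 * \sum_(k < D) u k * h (addI d k).

(* row n of the parameter matrix (u_{n+1} in the paper's 1-based indexing);
   0 outside the range *)
Definition urow {L D : nat} (U : 'M[R]_(L, D)) (n : nat) : 'I_D -> R :=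
  fun d => match insub n with Some l => U l d | None => 0 end.

Fixpoint corrs {L D : nat} (x : 'I_D -> R) (U : 'M[R]_(L, D)) (n : nat)
  : 'I_D -> R :=
  match n with
  | 0 => x
  | n'.+1 => corr (corrs x U n') (urow U n')
  end.

(* <x, P_conv(u)> = ((((x * u_1) * u_2) ...) * u_{L-1})^T u_L *)
Definition pconv_ip {L D : nat} (x : 'I_D -> R) (U : 'M[R]_(L, D)) : R :=
  \sum_(d < D) corrs x U L.-1 d * urow U L.-1 d.

Definition loss_conv {L D N : nat} (ell : R -> R -> R)
  (x : 'I_N -> 'I_D -> R) (y : 'I_N -> R) (U : 'M[R]_(L, D)) : R :=
  \sum_(n < N) ell (pconv_ip (x n) U) (y n).

Definition gradR {L D : nat} (f : 'M[R]_(L, D) -> R) (U : 'M[R]_(L, D))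
  : 'M[R]_(L, D) :=
  \matrix_(l < L, k < D) derive1 (fun s : R => f (U + s *: delta_mx l k)) 0.

Definition Fmat (D : nat) (d p : 'I_D) : R[i] :=
  let th : R := 2 * pi * (d * p)%N%:R / D%:R in
  (cos th -i* sin th) / (Num.sqrt (D%:R : R))%:C.

Definition dft {D : nat} (z : 'I_D -> R) : 'I_D -> R[i] :=
  fun d => \sum_(p < D) Fmat d p * (z p)%:C.

Definition Pdiag {L D : nat} (uh : 'I_L -> 'I_D -> R[i]) : 'I_D -> R[i] :=
  fun d => \prod_(l < L) uh l d.

Definition cip {D : nat} (a b : 'I_D -> R[i]) : R[i] :=
  \sum_(d < D) a d * (b d)^*.

Definition dloss (ell : R -> R -> R) (z c : R) : R :=
  derive1 (fun s => ell s c) z.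

Definition avec {L D : nat} (xh : 'I_D -> R[i]) (uh : 'I_L -> 'I_D -> R[i])
  (l : 'I_L) : 'I_D -> R[i] :=
  fun p => (\prod_(l' < L | l' != l) (uh l' p)^*) * xh p.

(* gradient of L^_{P_diag}(u^) = sum_n l(u^_l^{*T} a_{n,l}, y_n) w.r.t. u^_l,
   by the paper's convention  grad = sum_n l'(u^_l^{*T} a_{n,l}, y_n) a_{n,l}.
   l is defined on reals; its argument u^_l^{*T} a_{n,l} = <x^_n, P_diag(u^)>
   (real in the setting of the lemma) is fed to l' through its real part. *)
Definition grad_diag {L D N : nat} (ell : R -> R -> R)
  (xh : 'I_N -> 'I_D -> R[i]) (y : 'I_N -> R) (uh : 'I_L -> 'I_D -> R[i])
  (l : 'I_L) : 'I_D -> R[i] :=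
  fun p => \sum_(n < N)
    (dloss ell (complex.Re (\sum_(q < D) (uh l q)^* * avec (xh n) uh l q))
       (y n))%:C * avec (xh n) uh l p.

End Defs.

(* The DFT matrix F[d,p] = w^(dp) / sqrt D, where w = e^(-2 pi i/D) is a
   primitive D-th root of unity, is symmetric and unitary. So it turns a
   correlation into a product with a conjugate, (corr h u)^ = h^ (.) conj u^,
   and preserves inner products; hence <x, P_conv(u)> = <x^, P_diag(u^)>. This
   is affine in each row u_l, with slope sum_q a_q conj F[q,k] in the direction
   e_k. Thus row l of the real gradient is F^H applied to the gradient of the
   diagonal model, and F F^H = 1 gives the identity. *)

From HB Require Import structures.
From mathcomp Require Import all_boot all_order all_algebra.
From mathcomp Require Import all_classical all_reals all_analysis.
From mathcomp Require Import complex.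
From mathcomp Require Import ring lra.
Import Order.TTheory GRing.Theory Num.Theory.
Local Open Scope ring_scope.
Local Open Scope complex_scope.

Lemma cos_neq1 (R : realType) (x : R) : 0 < x < pi *+ 2 -> cos x != 1.
Proof.
move=> /andP[x_gt0 x_lt2pi]; apply/eqP => cosx1.
have sin_half_gt0 : 0 < sin (x / 2).
  by apply: sin_gt0_pi; rewrite divr_gt0 // ltr_pdivrMr // mulr_natr x_lt2pi.
have : sin (x / 2) ^+ 2 = 0.
  have : cos ((x / 2) *+ 2) = 1 by rewrite -mulr_natr mulfVK.
  rewrite cos_mulr2n sin2cos2 => h; lra.
by move/eqP; rewrite sqrf_eq0 gt_eqF.
Qed.

Lemma sum_expr_unity (F : idomainType) (z : F) n :
  z ^+ n = 1 -> \sum_(k < n) z ^+ k = if z == 1 then n%:R else 0.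
Proof.
move=> zn1; have [-> | z_neq1] := eqVneq z 1.
  rewrite (eq_bigr (fun=> 1)) ?sumr_const ?card_ord // => k _.
  by rewrite expr1n.
have : (z - 1) * \sum_(k < n) z ^+ k = 0 by rewrite -subrX1 zn1 subrr.
by move/eqP; rewrite mulf_eq0 subr_eq0 (negbTE z_neq1) => /eqP.
Qed.

Section LineDerivative.
Context {R : realType}.

Lemma is_derive_line (a b x : R) : is_derive x 1 (fun s => a + s * b) b.
Proof.
have -> : (fun s => a + s * b) = cst a + b *: id.
  by apply/funext => s /=; rewrite mulrC.
have : is_derive x 1 (cst a + b *: id) (0 + b *: (1 : R)) by apply: is_deriveD.
by rewrite add0r scaler1.
Qed.

Lemma derive1_sum_line {N} (f : 'I_N -> R -> R) (a b : 'I_N -> R) :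
  (forall n z, derivable (f n) z 1) ->
  derive1 (fun s => \sum_(n < N) f n (a n + s * b n)) 0
    = \sum_(n < N) derive1 (f n) (a n) * b n.
Proof.
move=> f_der; pose line n (s : R) := a n + s * b n.
have line_der n : derivable (line n) 0 1.
  by have [] := is_derive_line (a n) (b n) 0.
have comp_der n : derivable (f n \o line n) 0 1.
  apply/derivable1_diffP/differentiable_comp; apply/derivable1_diffP.
    exact: line_der.
  exact: f_der.
rewrite (_ : (fun s => _) = \sum_(n < N) (f n \o line n)); last first.
  by rewrite fct_sumE.
rewrite derive1E derive_sum //; apply: eq_bigr => n _.
rewrite -derive1E derive1_comp // /line mul0r addr0 !derive1E.
by have [_ ->] := is_derive_line (a n) (b n) 0.
Qed.

End LineDerivative.

Section DiagonalForm.
Context {R : realType} {L D : nat}.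
Implicit Types (xh : 'I_D -> R[i]) (uh vh : 'I_L -> 'I_D -> R[i]).

Lemma cip_Pdiag_avec xh uh (l : 'I_L) :
  cip xh (Pdiag uh) = \sum_(q < D) (uh l q)^* * avec xh uh l q.
Proof.
apply: eq_bigr => q _; rewrite /Pdiag rmorph_prod (bigD1 l) //= /avec; ring.
Qed.

Lemma eq_avec xh uh vh (l : 'I_L) :
  (forall j, j != l -> uh j =1 vh j) -> avec xh uh l =1 avec xh vh l.
Proof.
by move=> eq_uv p; rewrite /avec; congr (_ * _); apply: eq_bigr => j /eq_uv ->.
Qed.

End DiagonalForm.

Section DFT.
(* In this section [^*] is [Num.conj], as produced by the morphism lemmas. *)
Local Open Scope ring_scope.
Context {R : realType} {D : nat}.
Hypothesis D_gt0 : (0 < D)%N.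

Local Notation F := (@Fmat R D).

Lemma conj_real_complex (x : R) : (x%:C)^* = x%:C.
Proof. exact: conjc_real. Qed.

Definition dft_root : R[i] := cos (2 * pi / D%:R) -i* sin (2 * pi / D%:R).

Definition sqrtD : R[i] := (Num.sqrt (D%:R : R))%:C.

Arguments dft_root : simpl never.
Arguments sqrtD : simpl never.

Lemma dft_rootX m :
  dft_root ^+ m = cos (2 * pi * m%:R / D%:R) -i* sin (2 * pi * m%:R / D%:R).
Proof.
elim: m => [|m IHm]; first by rewrite expr0 !(mulr0, mul0r) cos0 sin0 oppr0.
have -> : 2 * pi * m.+1%:R / D%:R = 2 * pi / D%:R + 2 * pi * m%:R / D%:R :> R.
  by rewrite mulrS; ring.
rewrite exprS IHm cosD sinD.
by apply/eqP; rewrite eq_complex /=; apply/andP; split; apply/eqP; ring.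
Qed.

Lemma Fmat_root (d p : 'I_D) : F d p = dft_root ^+ (d * p) / sqrtD.
Proof. by rewrite dft_rootX. Qed.

Lemma Fmat_sym (d p : 'I_D) : F d p = F p d.
Proof. by rewrite !Fmat_root mulnC. Qed.

Lemma dft_root_prim : D.-primitive_root dft_root.
Proof.
have D_neq0 : (D%:R : R) != 0 by rewrite pnatr_eq0 -lt0n.
rewrite /primitive_root_of_unity D_gt0; apply/forallP => i.
rewrite unity_rootE dft_rootX.
have [iD | iD] := eqVneq i.+1 D.
  by rewrite iD mulfK // mulr_natl cos2pi sin2pi oppr0 !eqxx.
have iltD : (i.+1 < D)%N by rewrite ltn_neqAle iD ltn_ord.
apply/eqP/negbTE; rewrite eq_complex negb_and cos_neq1 //=.
rewrite divr_gt0 ?mulr_gt0 ?pi_gt0 ?ltr0n //= ltr_pdivrMr ?ltr0n //.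
by rewrite -[pi *+ 2]mulr_natl ltr_pM2l ?mulr_gt0 ?pi_gt0 ?ltr_nat.
Qed.

Lemma dft_rootX_neq0 m : dft_root ^+ m != 0.
Proof. by rewrite expf_neq0 // (prim_root_eq0 dft_root_prim) -lt0n. Qed.

Lemma conj_dft_rootX m : (dft_root ^+ m)^* = dft_root ^- m.
Proof.
have norm1 : dft_root * dft_root^* = 1.
  have := @cos2Dsin2 R (2 * pi / D%:R); rewrite !expr2 => cs1.
  by apply/eqP; rewrite eq_complex /=; apply/andP; split; apply/eqP; lra.
have conj_root : dft_root^* = dft_root^-1.
  by rewrite -[LHS](mulKf (dft_rootX_neq0 1)) norm1 mulr1.
by rewrite rmorphXn /= conj_root exprVn.
Qed.

Lemma conj_sqrtD : sqrtD^* = sqrtD.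
Proof. exact: conj_real_complex. Qed.

Lemma sqrtD_sqr : sqrtD * sqrtD = D%:R.
Proof. by rewrite -rmorphM -expr2 sqr_sqrtr ?ler0n // rmorph_nat. Qed.

Lemma sqrtD_neq0 : sqrtD != 0.
Proof.
apply: contraTneq D_gt0 => s0; move: sqrtD_sqr; rewrite s0 mul0r => /esym/eqP.
by rewrite pnatr_eq0 => /eqP ->.
Qed.

Lemma conj_Fmat (p k : 'I_D) : (F p k)^* = dft_root ^- (p * k) / sqrtD.
Proof. by rewrite Fmat_root rmorphM fmorphV /= conj_sqrtD conj_dft_rootX. Qed.

Lemma Fmat_orthonormal (p q : 'I_D) :
  \sum_(k < D) F p k * (F q k)^* = (p == q)%:R.
Proof.
pose z := dft_root ^+ p / dft_root ^+ q.
have zD : z ^+ D = 1.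
  have rootXD m : (dft_root ^+ m) ^+ D = 1.
    by rewrite exprAC (prim_expr_order dft_root_prim) expr1n.
  by rewrite exprMn exprVn !rootXD invr1 mulr1.
have z1 : (z == 1) = (p == q).
  rewrite -(inj_eq (mulIf (dft_rootX_neq0 q))) divfK ?dft_rootX_neq0 // mul1r.
  by rewrite (eq_prim_root_expr dft_root_prim) !modn_small.
rewrite (eq_bigr (fun k : 'I_D => z ^+ k / D%:R)); last first.
  move=> k _; rewrite conj_Fmat Fmat_root -sqrtD_sqr /z exprMn exprVn -!exprM.
  by rewrite invfM mulrACA.
rewrite -mulr_suml sum_expr_unity // z1; case: eqP => _; last by rewrite mul0r.
by rewrite mulfV // pnatr_eq0 -lt0n.
Qed.

Lemma Fmat_adjointK (a : 'I_D -> R[i]) (p : 'I_D) :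
  \sum_(k < D) F p k * \sum_(q < D) a q * (F q k)^* = a p.
Proof.
rewrite (eq_bigr (fun k => \sum_(q < D) a q * (F p k * (F q k)^*))); last first.
  by move=> k _; rewrite mulr_sumr; apply: eq_bigr => q _; rewrite mulrCA.
rewrite exchange_big /= (bigD1 p) //= -mulr_sumr Fmat_orthonormal eqxx mulr1.
rewrite big1 ?addr0 // => q q_neq_p.
by rewrite -mulr_sumr Fmat_orthonormal eq_sym (negbTE q_neq_p) mulr0.
Qed.

Lemma dftB (f g : 'I_D -> R) p : dft (fun k => f k - g k) p = dft f p - dft g p.
Proof.
by rewrite /dft -sumrB; apply: eq_bigr => k _; rewrite rmorphB mulrBr.
Qed.

Lemma dftZ (a : R) (f : 'I_D -> R) p :
  dft (fun k => a * f k) p = a%:C * dft f p.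
Proof.
by rewrite /dft mulr_sumr; apply: eq_bigr => k _; rewrite rmorphM mulrCA.
Qed.

Lemma conj_dft (b : 'I_D -> R) (p : 'I_D) :
  (dft b p)^* = \sum_(e < D) (b e)%:C * (F e p)^*.
Proof.
rewrite rmorph_sum; apply: eq_bigr => e _.
by rewrite rmorphM /= conj_real_complex mulrC Fmat_sym.
Qed.

Lemma dft_parseval (a b : 'I_D -> R) :
  (\sum_(d < D) a d * b d)%:C = \sum_(p < D) dft a p * (dft b p)^*.
Proof.
rewrite rmorph_sum; under [RHS]eq_bigr => p _ do rewrite /dft mulr_suml.
rewrite [RHS]exchange_big /=; apply: eq_bigr => d _.
rewrite rmorphM /= -(Fmat_adjointK (fun e => (b e)%:C)) mulr_sumr.
by apply: eq_bigr => p _; rewrite conj_dft Fmat_sym mulrCA mulrA.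
Qed.

Lemma addI_inj (k : 'I_D) : injective (addI ^~ k).
Proof.
move=> d d' /(congr1 val) /= /eqP; rewrite eqn_modDr !modn_small // => /eqP.
exact: val_inj.
Qed.

Lemma Fmat_addI (p d k : 'I_D) : F p (addI d k) * (F p k)^* = F p d / sqrtD.
Proof.
have -> : F p (addI d k) = dft_root ^+ (p * d) * dft_root ^+ (p * k) / sqrtD.
  rewrite Fmat_root -exprD -mulnDr -(prim_expr_mod dft_root_prim) /=.
  by rewrite modnMmr (prim_expr_mod dft_root_prim).
by rewrite conj_Fmat Fmat_root mulrACA mulfK ?dft_rootX_neq0 // mulrA.
Qed.

Lemma dft_corr (h u : 'I_D -> R) (p : 'I_D) :
  dft (corr h u) p = dft h p * (dft u p)^*.
Proof.
rewrite conj_dft mulr_sumr.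
transitivity (\sum_(k < D) \sum_(d < D)
                F p d / sqrtD * (u k)%:C * (h (addI d k))%:C).
  rewrite /dft exchange_big /=; apply: eq_bigr => d _.
  rewrite /corr rmorphM rmorph_sum fmorphV /= -/sqrtD !mulr_sumr.
  by apply: eq_bigr => k _; rewrite rmorphM /= !mulrA.
apply: eq_bigr => k _.
rewrite /dft mulr_suml [RHS](reindex_inj (addI_inj k)) /=.
apply: eq_bigr => d _.
by rewrite [F k p]Fmat_sym -(Fmat_addI p d k); ring.
Qed.

Lemma dft_corrs L (x : 'I_D -> R) (U : 'M[R]_(L, D)) n p :
  dft (corrs x U n) p = dft x p * \prod_(j < n) (dft (urow U j) p)^*.
Proof.
elim: n => [|n IHn]; first by rewrite big_ord0 mulr1.
by rewrite /= dft_corr IHn big_ord_recr /= mulrA.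
Qed.

Definition dft_rows {L} (U : 'M[R]_(L, D)) (j : 'I_L) : 'I_D -> R[i] :=
  dft (fun k => U j k).

Lemma urowE {L} (U : 'M[R]_(L, D)) (j : 'I_L) : urow U j = fun k => U j k.
Proof. by rewrite /urow valK. Qed.

Lemma pconv_ipE L (x : 'I_D -> R) (U : 'M[R]_(L, D)) :
  (0 < L)%N -> (pconv_ip x U)%:C = cip (dft x) (Pdiag (dft_rows U)).
Proof.
case: L U => // L U _.
rewrite /pconv_ip dft_parseval; apply: eq_bigr => p _.
rewrite dft_corrs /Pdiag rmorph_prod big_ord_recr /= -mulrA.
congr (_ * (_ * _)); last by rewrite (urowE U ord_max).
by apply: eq_bigr => j _; rewrite (urowE U (widen_ord _ j)).
Qed.

Lemma dft_rows_perturb L (U : 'M[R]_(L, D)) (l j : 'I_L) (k p : 'I_D) (s : R) :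
  dft_rows (U + s *: delta_mx l k) j p
    = dft_rows U j p + (j == l)%:R * s%:C * F p k.
Proof.
rewrite /dft_rows /dft.
under eq_bigr => d _ do rewrite !mxE rmorphD mulrDr.
rewrite big_split /=; congr (_ + _).
rewrite (bigD1 k) //= big1 ?addr0 => [|d /negbTE d_neq_k]; last first.
  by rewrite d_neq_k andbF mulr0 rmorph0 mulr0.
rewrite eqxx andbT; case: (j == l).
  by rewrite mulr1 mul1r mulrC.
by rewrite mulr0 rmorph0 !mul0r mulr0.
Qed.

Lemma pconv_ip_perturb L (x : 'I_D -> R) (U : 'M[R]_(L, D)) l k (s : R) :
  (0 < L)%N ->
  (pconv_ip x (U + s *: delta_mx l k))%:C = (pconv_ip x U)%:C
    + s%:C * \sum_(q < D) avec (dft x) (dft_rows U) l q * (F q k)^*.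
Proof.
move=> L_gt0; rewrite !pconv_ipE // !(cip_Pdiag_avec _ _ l).
rewrite mulr_sumr -big_split.
apply: eq_bigr => q _ /=.
rewrite (eq_avec _ _ (dft_rows U)); last first.
  by move=> j j_neq_l p; rewrite dft_rows_perturb (negbTE j_neq_l) !mul0r addr0.
rewrite dft_rows_perturb eqxx mul1r rmorphD rmorphM /= conj_real_complex.
by ring.
Qed.

Lemma pconv_ip_line L (x : 'I_D -> R) (U : 'M[R]_(L, D)) l k (s : R) :
  (0 < L)%N ->
  pconv_ip x (U + s *: delta_mx l k)
    = pconv_ip x U + s * (pconv_ip x (U + delta_mx l k) - pconv_ip x U).
Proof.
move=> L_gt0; apply: complexI; rewrite rmorphD rmorphM rmorphB /=.
by rewrite -[delta_mx l k in RHS]scale1r !pconv_ip_perturb //; ring.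
Qed.

Lemma pconv_ip_slope L (x : 'I_D -> R) (U : 'M[R]_(L, D)) l k :
  (0 < L)%N ->
  (pconv_ip x (U + delta_mx l k) - pconv_ip x U)%:C
    = \sum_(q < D) avec (dft x) (dft_rows U) l q * (F q k)^*.
Proof.
move=> L_gt0; rewrite rmorphB /= -[delta_mx l k]scale1r pconv_ip_perturb //.
by rewrite mul1r addrC addKr.
Qed.

End DFT.

Section ConvGradient.
Variables (R : realType) (L D N : nat).
Hypotheses (L_gt0 : (0 < L)%N) (D_gt0 : (0 < D)%N).
Variables (ell : R -> R -> R) (x : 'I_N -> 'I_D -> R) (y : 'I_N -> R).
Hypothesis ell_derivable : forall z c, derivable (fun s => ell s c) z 1.

Lemma gradR_loss_conv (U : 'M[R]_(L, D)) l k :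
  gradR (loss_conv ell x y) U l k = \sum_(n < N)
    dloss ell (pconv_ip (x n) U) (y n)
      * (pconv_ip (x n) (U + delta_mx l k) - pconv_ip (x n) U).
Proof.
rewrite mxE /loss_conv (_ : (fun s => _) = fun s => \sum_(n < N)
    ell (pconv_ip (x n) U
         + s * (pconv_ip (x n) (U + delta_mx l k) - pconv_ip (x n) U)) (y n)).
  apply: (derive1_sum_line (fun n z => ell z (y n))) => n z.
  exact: ell_derivable.
by apply/funext => s; apply: eq_bigr => n _; rewrite pconv_ip_line.
Qed.

Lemma dft_gradR_loss_conv (U : 'M[R]_(L, D)) l p :
  dft (fun k => gradR (loss_conv ell x y) U l k) p
    = grad_diag ell (fun n => dft (x n)) y (dft_rows U) l p.
Proof.
rewrite /grad_diag.
under [RHS]eq_bigr => n _ do rewrite -cip_Pdiag_avec -pconv_ipE //=.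
rewrite [LHS]/dft.
under [LHS]eq_bigr => k _ do rewrite gradR_loss_conv rmorph_sum mulr_sumr.
rewrite exchange_big /=; apply: eq_bigr => n _.
rewrite -[in RHS](Fmat_adjointK D_gt0) mulr_sumr; apply: eq_bigr => k _.
by rewrite rmorphM /= pconv_ip_slope // mulrCA.
Qed.

End ConvGradient.

Theorem lemma6 (R : realType) (L D N : nat) (hL : (0 < L)%N) (hD : (0 < D)%N)
  (x : 'I_N -> 'I_D -> R) (y : 'I_N -> R)
  (hy : forall n, y n = 1 \/ y n = -1)
  (ell : R -> R -> R)
  (hell : forall (z c : R), derivable (fun s => ell s c) z 1)
  (eta : nat -> R) (u : nat -> 'M[R]_(L, D))
  (hGD : forall t, u t.+1 = u t - eta t *: gradR (loss_conv ell x y) (u t)) :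
  forall (t : nat) (l : 'I_L) (p : 'I_D),
    dft (fun k => u t.+1 l k - u t l k) p
      = dft (fun k => u t.+1 l k) p - dft (fun k => u t l k) p
    /\ dft (fun k => u t.+1 l k - u t l k) p
      = - (eta t)%:C
          * grad_diag ell (fun n => dft (x n)) y
              (fun l' => dft (fun k => u t l' k)) l p.
Proof.
move=> t l p; split; first exact: dftB.
rewrite (_ : (fun k => _ - _)
             = fun k => - eta t * gradR (loss_conv ell x y) (u t) l k).
  by rewrite dftZ rmorphN dft_gradR_loss_conv.
by apply/funext => k; rewrite hGD !mxE addrAC subrr add0r mulNr.
Qed.
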